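(* Let $h\colon[0,1/2]\to[0,1]$ be the binary entropy function (in bits), $h^{-1}\colon[0,1]\to[0,1/2]$ its inverse, and $a\ast b=a(1-b)+(1-a)b$. For every $x\in[0,1]$, the function $g_x(t)=h\big(h^{-1}(t)\ast h^{-1}(2x-t)\big)$, defined for $t\in[\max\{0,2x-1\},x]$, is decreasing in $t$. *)

From Stdlib Require Import Reals.
Open Scope R_scope.

Definition xlog2x (x : R) : R :=
  if Rle_dec x 0 then 0 else x * (ln x / ln 2).

Definition hb (p : R) : R := - xlog2x p - xlog2x (1 - p).

Definition bconv (a b : R) : R := a * (1 - b) + (1 - a) * b.

(* Work in nats with the negentropy F(p) = p ln p + (1-p) ln (1-p) = -ln 2 h(p),
   strictly decreasing on [0, 1/2].  For t1 <= t2 <= x put a_i = h^{-1}(t_i),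
   b_i = h^{-1}(2x - t_i); then a1 <= a2 <= b2 <= b1 and F a1 + F b1 = F a2 + F b2.
   As 1 - 2 (a * b) = (1 - 2a)(1 - 2b) and h increases on [0, 1/2], the theorem
   reduces to the bias inequality (1 - 2 a1)(1 - 2 b1) <= (1 - 2 a2)(1 - 2 b2).
   In logarithms, with L(p) = ln (1 - 2p), it compares the chords of L over
   [a1, a2] and [b2, b1], which span the same increment of F.  Cauchy's mean
   value theorem writes each chord as 2 (F-increment) / rho(c), where
   rho(c) = (1 - 2c)(ln (1-c) - ln c) is positive and decreasing on (0, 1/2). *)

From Stdlib Require Import Reals Lra.
From Coquelicot Require Import Coquelicot.
Open Scope R_scope.

Definition negentropy (p : R) : R := p * ln p + (1 - p) * ln (1 - p).

Definition logbias (p : R) : R := ln (1 - 2 * p).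

(* Ratio of the derivatives of negentropy and logbias, up to the factor -2. *)
Definition rho (c : R) : R := (1 - 2 * c) * (ln (1 - c) - ln c).

Lemma ln2_pos : 0 < ln 2.
Proof. pose proof ln_lt_2; lra. Qed.

Lemma ln_nonpos x : x <= 0 -> ln x = 0.
Proof.
  intros Hx. unfold ln. destruct (Rlt_dec 0 x); [exfalso; lra | reflexivity].
Qed.

Lemma ln_le_inv x y : 0 < x -> 0 < y -> ln x <= ln y -> x <= y.
Proof.
  intros Hx Hy Hln. destruct (Rle_lt_dec x y) as [|Hyx]; [assumption|].
  pose proof (ln_increasing y x Hy Hyx). lra.
Qed.

(* The convention 0 log 0 = 0 of xlog2x matches ln 0 = 0. *)
Lemma hb_negentropy p : hb p = - negentropy p / ln 2.
Proof.
  pose proof ln2_pos as H2.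
  assert (Hx : forall y, xlog2x y = y * ln y / ln 2).
  { intro y. unfold xlog2x. destruct (Rle_dec y 0).
    - rewrite ln_nonpos by lra. unfold Rdiv; ring.
    - unfold Rdiv; ring. }
  unfold hb, negentropy. rewrite !Hx. field. lra.
Qed.

(* Near 0, |p ln p| is dominated by 2 sqrt p, since ln (1/s) < 1/s. *)
Lemma xlnx_bound p : 0 < p < 1 -> 0 < - (p * ln p) < 2 * sqrt p.
Proof.
  intros Hp. set (s := sqrt p).
  assert (Hs : 0 < s) by (apply sqrt_lt_R0; lra).
  assert (Hss : s * s = p) by (apply sqrt_sqrt; lra).
  assert (Hlnp : ln p < 0) by (rewrite <- ln_1; apply ln_increasing; lra).
  assert (Hlns : ln p = - 2 * ln (/ s)).
  { rewrite <- Hss, ln_mult by lra. rewrite ln_Rinv by lra. ring. }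
  assert (Hinv : ln (/ s) < / s).
  { pose proof (exp_ineq1_le (ln (/ s))) as He.
    rewrite exp_ln in He by (apply Rinv_0_lt_compat; lra). lra. }
  split; [nra|].
  rewrite Hlns, <- Hss.
  assert (s * s * (2 * ln (/ s)) < s * s * (2 * / s)) by (apply Rmult_lt_compat_l; nra).
  assert (s * s * (2 * / s) = 2 * s) by (field; lra).
  lra.
Qed.

Lemma xlnx_cont0 : continuity_pt (fun p => p * ln p) 0.
Proof.
  intros eps Heps. exists (Rmin 1 ((eps / 2) ^ 2)). split.
  { apply Rmin_pos; [lra|]. apply pow_lt; lra. }
  intros p [_ Hp]. simpl in *. unfold R_dist in *.
  change (eps / 2 * (eps / 2 * 1)) with ((eps / 2) ^ 2) in Hp.
  rewrite Rmult_0_l, Rminus_0_r in *.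
  destruct (Rle_dec p 0) as [Hn|Hn].
  - rewrite ln_nonpos by lra. rewrite Rmult_0_r, Rabs_R0. lra.
  - rewrite Rabs_right in Hp by lra.
    pose proof (Rmin_l 1 ((eps / 2) ^ 2)). pose proof (Rmin_r 1 ((eps / 2) ^ 2)).
    assert (Hsq : sqrt p < eps / 2).
    { rewrite <- (sqrt_pow2 (eps / 2)) by lra. apply sqrt_lt_1_alt; lra. }
    pose proof (xlnx_bound p ltac:(lra)).
    rewrite Rabs_left; lra.
Qed.

Lemma negentropy_deriv c : 0 < c < 1 ->
  derivable_pt_lim negentropy c (ln c - ln (1 - c)).
Proof.
  intros Hc. apply is_derive_Reals. unfold negentropy. auto_derive.
  - repeat split; lra.
  - replace (1 + - c) with (1 - c) by ring. field. lra.
Qed.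

Lemma negentropy_cont c : 0 <= c < 1 -> continuity_pt negentropy c.
Proof.
  intros Hc. destruct (Req_dec c 0) as [->|Hc0].
  - unfold negentropy. apply continuity_pt_plus; [exact xlnx_cont0|].
    apply derivable_continuous_pt. eexists.
    apply is_derive_Reals. auto_derive; [lra | reflexivity].
  - apply derivable_continuous_pt. eexists. apply negentropy_deriv. lra.
Qed.

Lemma cauchy_mvt_negentropy (g g' : R -> R) a b : 0 <= a -> a < b -> b < 1 ->
  (forall c, a < c < b -> derivable_pt_lim g c (g' c)) ->
  (forall c, a <= c <= b -> continuity_pt g c) ->
  exists c, a < c < b /\
    (g b - g a) * (ln c - ln (1 - c)) = (negentropy b - negentropy a) * g' c.
Proof.
  intros Ha Hab Hb Hd Hc.
  assert (prF : forall c, a < c < b -> derivable_pt negentropy c).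
  { intros c Hc'. eexists. apply negentropy_deriv. lra. }
  assert (prg : forall c, a < c < b -> derivable_pt g c).
  { intros c Hc'. eexists. apply Hd, Hc'. }
  destruct (MVT negentropy g a b prF prg Hab) as [c [Pc E]].
  - intros c Hc'. apply negentropy_cont. lra.
  - exact Hc.
  - exists c. split; [exact Pc|].
    rewrite (derive_pt_eq_0 _ _ _ (prF c Pc)) in E by (apply negentropy_deriv; lra).
    rewrite (derive_pt_eq_0 _ _ _ (prg c Pc)) in E by (apply Hd, Pc).
    exact E.
Qed.

Lemma negentropy_decr a b : 0 <= a -> a < b -> b <= 1/2 ->
  negentropy b < negentropy a.
Proof.
  intros Ha Hab Hb.
  destruct (cauchy_mvt_negentropy id (fun _ => 1) a b Ha Hab ltac:(lra))
    as [c [Hc E]].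
  - intros c _. apply derivable_pt_lim_id.
  - intros c _. apply derivable_continuous_pt, derivable_pt_id.
  - unfold id in E.
    assert (ln c < ln (1 - c)) by (apply ln_increasing; lra).
    nra.
Qed.

Lemma hb_incr a b : 0 <= a -> a < b -> b <= 1/2 -> hb a < hb b.
Proof.
  intros Ha Hab Hb. rewrite !hb_negentropy.
  pose proof (negentropy_decr a b Ha Hab Hb). pose proof ln2_pos.
  unfold Rdiv. apply Rmult_lt_compat_r; [apply Rinv_0_lt_compat|]; lra.
Qed.

Lemma hb_le a b : 0 <= a -> a <= b -> b <= 1/2 -> hb a <= hb b.
Proof.
  intros Ha Hab Hb. destruct (Req_dec a b) as [->|]; [lra|].
  left. apply hb_incr; lra.
Qed.

Lemma hb_reflect a b : 0 <= a <= 1/2 -> 0 <= b <= 1/2 -> hb a <= hb b -> a <= b.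
Proof.
  intros Ha Hb Hab. destruct (Rle_lt_dec a b) as [|Hba]; [assumption|].
  pose proof (hb_incr b a ltac:(lra) Hba ltac:(lra)). lra.
Qed.

Lemma logbias_deriv c : c < 1/2 -> derivable_pt_lim logbias c (-2 / (1 - 2 * c)).
Proof.
  intros Hc. apply is_derive_Reals. unfold logbias. auto_derive; [lra|].
  field. lra.
Qed.

Lemma logbias_cont c : c < 1/2 -> continuity_pt logbias c.
Proof. intros Hc. apply derivable_continuous_pt. eexists. apply logbias_deriv, Hc. Qed.

Lemma logbias_chord a b : 0 <= a -> a < b -> b < 1/2 ->
  exists c, a < c < b /\
    (logbias b - logbias a) * rho c = 2 * (negentropy b - negentropy a).
Proof.
  intros Ha Hab Hb.
  destruct (cauchy_mvt_negentropy logbias (fun c => -2 / (1 - 2 * c)) a b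
              Ha Hab ltac:(lra)) as [c [Hc E]].
  - intros c Hc. apply logbias_deriv. lra.
  - intros c Hc. apply logbias_cont. lra.
  - exists c. split; [exact Hc|]. unfold rho.
    replace ((logbias b - logbias a) * ((1 - 2 * c) * (ln (1 - c) - ln c)))
      with (- ((logbias b - logbias a) * (ln c - ln (1 - c))) * (1 - 2 * c)) by ring.
    rewrite E. field. lra.
Qed.

Lemma rho_pos c : 0 < c < 1/2 -> 0 < rho c.
Proof.
  intros Hc. unfold rho.
  assert (ln c < ln (1 - c)) by (apply ln_increasing; lra). nra.
Qed.

(* Both factors of rho are positive and decreasing on (0, 1/2). *)
Lemma rho_decr c d : 0 < c -> c < d -> d < 1/2 -> rho d < rho c.
Proof.
  intros Hc Hcd Hd. unfold rho.
  assert (ln c < ln d) by (apply ln_increasing; lra).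
  assert (ln (1 - d) < ln (1 - c)) by (apply ln_increasing; lra).
  assert (ln d < ln (1 - d)) by (apply ln_increasing; lra).
  nra.
Qed.

Lemma bias_product_le a1 a2 b2 b1 :
  0 <= a1 -> a1 <= a2 -> a2 <= b2 -> b2 <= b1 -> b1 <= 1/2 ->
  negentropy a1 + negentropy b1 = negentropy a2 + negentropy b2 ->
  (1 - 2 * a1) * (1 - 2 * b1) <= (1 - 2 * a2) * (1 - 2 * b2).
Proof.
  intros Ha1 H12 H22 H21 Hb1 Hsum.
  destruct (Req_dec b1 (1/2)) as [->|Hb1']; [nra|].
  destruct (Req_dec a1 a2) as [<-|Ha12]; [nra|].
  assert (Hdrop : negentropy a2 < negentropy a1) by (apply negentropy_decr; lra).
  destruct (Req_dec b2 b1) as [->|Hb21]; [lra|].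
  destruct (logbias_chord a1 a2) as [xi [Hxi Exi]]; try lra.
  destruct (logbias_chord b2 b1) as [eta [Heta Eeta]]; try lra.
  pose proof (rho_pos eta ltac:(lra)) as Heta_pos.
  pose proof (rho_decr xi eta ltac:(lra) ltac:(lra) ltac:(lra)) as Hrho.
  (* Both chords carry the same negative negentropy increment D; dividing it by
     the smaller rho eta gives the more negative slope. *)
  set (D := negentropy a2 - negentropy a1) in *.
  assert (HD : negentropy b1 - negentropy b2 = D) by (unfold D; lra).
  rewrite HD in Eeta.
  set (P := logbias a2 - logbias a1) in *. set (Q := logbias b1 - logbias b2) in *.
  assert (HP : P < 0) by nra.
  assert (HQP : Q * rho eta < P * rho eta) by nra.
  assert (Hlog : logbias a1 + logbias b1 <= logbias a2 + logbias b2).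
  { assert (Q < P) by nra. unfold P, Q in *. lra. }
  unfold logbias in Hlog. rewrite <- !ln_mult in Hlog by lra.
  apply ln_le_inv; [nra | nra | exact Hlog].
Qed.

Lemma bconv_bias a b : 1 - 2 * bconv a b = (1 - 2 * a) * (1 - 2 * b).
Proof. unfold bconv. ring. Qed.

Theorem mainTheorem4 (hinv : R -> R)
  (hinv_range : forall t, 0 <= t <= 1 -> 0 <= hinv t <= 1/2)
  (hinv_inv : forall t, 0 <= t <= 1 -> hb (hinv t) = t)
  (x : R) (hx : 0 <= x <= 1) :
  forall t1 t2,
    Rmax 0 (2 * x - 1) <= t1 -> t1 <= t2 -> t2 <= x ->
    hb (bconv (hinv t2) (hinv (2 * x - t2)))
      <= hb (bconv (hinv t1) (hinv (2 * x - t1))).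
Proof.
  intros t1 t2 Ht1 H12 Ht2.
  pose proof (Rmax_l 0 (2 * x - 1)). pose proof (Rmax_r 0 (2 * x - 1)).
  assert (T1 : 0 <= t1 <= 1) by lra. assert (T2 : 0 <= t2 <= 1) by lra.
  assert (S1 : 0 <= 2 * x - t1 <= 1) by lra. assert (S2 : 0 <= 2 * x - t2 <= 1) by lra.
  pose proof (hinv_range _ T1). pose proof (hinv_range _ T2).
  pose proof (hinv_range _ S1). pose proof (hinv_range _ S2).
  pose proof (hinv_inv _ T1). pose proof (hinv_inv _ T2).
  pose proof (hinv_inv _ S1). pose proof (hinv_inv _ S2).
  set (a1 := hinv t1) in *. set (a2 := hinv t2) in *.
  set (b1 := hinv (2 * x - t1)) in *. set (b2 := hinv (2 * x - t2)) in *.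
  assert (Horder : a1 <= a2 <= b2 /\ b2 <= b1) by (repeat split; apply hb_reflect; lra).
  assert (Hsum : negentropy a1 + negentropy b1 = negentropy a2 + negentropy b2).
  { assert (hb a1 + hb b1 = hb a2 + hb b2) as E by lra.
    rewrite !hb_negentropy in E. pose proof ln2_pos.
    apply (Rmult_eq_reg_r (- / ln 2)); [|apply Ropp_neq_0_compat, Rinv_neq_0_compat; lra].
    unfold Rdiv in E. lra. }
  pose proof (bias_product_le a1 a2 b2 b1 ltac:(lra) ltac:(lra) ltac:(lra)
                ltac:(lra) ltac:(lra) Hsum) as Hbias.
  rewrite <- !bconv_bias in Hbias.
  apply hb_le; [| lra |]; unfold bconv; nra.
Qed.
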